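(* Let $R$ be a finite Frobenius ring, $\chi$ a generating character of $R$, $M=\{x_0=0,x_1,\ldots,x_n\}$ a finite $R$-bimodule, and $B,B'$ non-degenerate bilinear forms on $M$. Then the matrices $H=[\chi(B(x_i,x_j))]_{0\le i,j\le n}$ and $H'=[\chi(B'(x_i,x_j))]_{0\le i,j\le n}$ are equivalent by a row permutation, i.e. $H'$ is obtained from $H$ by permuting its rows.
   Context: A bilinear form on $M$ is a biadditive map $B:M\times M\to R$ with $B(rx,y)=rB(x,y)$ and $B(x,yr)=B(x,y)r$; it is non-degenerate if its left and right kernels are zero. A character of $R$ is a group homomorphism $(R,+)\to\mathbb{C}^*$; it is generating if its kernel contains no nonzero left ideal and no nonzero right ideal of $R$. *)

From mathcomp Require Import all_boot all_order all_algebra all_fingroup all_field.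
Set Implicit Arguments. Unset Strict Implicit. Unset Printing Implicit Defensive.
Import GRing.Theory.
Local Open Scope ring_scope.

(* A character of R: a group homomorphism (R,+) -> C^*, with C modelled by
   algC (every such character of a finite group takes root-of-unity values). *)
Definition is_character (R : finPzRingType) (chi : R -> algC) : Prop :=
  (forall a b : R, chi (a + b) = chi a * chi b) /\ (forall a : R, chi a != 0).

Definition left_ideal (R : finPzRingType) (I : {set R}) : Prop :=
  0 \in I /\ (forall x y, x \in I -> y \in I -> x - y \in I) /\
  (forall r x, x \in I -> r * x \in I).

Definition right_ideal (R : finPzRingType) (I : {set R}) : Prop :=
  0 \in I /\ (forall x y, x \in I -> y \in I -> x - y \in I) /\
  (forall r x, x \in I -> x * r \in I).

Definition generating (R : finPzRingType) (chi : R -> algC) : Prop :=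
  (forall I : {set R}, left_ideal I -> (forall x, x \in I -> chi x = 1) -> I = [set 0]) /\
  (forall I : {set R}, right_ideal I -> (forall x, x \in I -> chi x = 1) -> I = [set 0]).

(* Finite Frobenius ring, via Wood's characterization: admits a generating character. *)
Definition Frobenius (R : finPzRingType) : Prop :=
  exists chi : R -> algC, is_character chi /\ generating chi.

Definition is_bimodule (R : finPzRingType) (M : finZmodType)
  (la : R -> M -> M) (ra : M -> R -> M) : Prop :=
  ((forall r x y, la r (x + y) = la r x + la r y) /\
   (forall r s x, la (r + s) x = la r x + la s x) /\
   (forall r s x, la (r * s) x = la r (la s x)) /\
   (forall x, la 1 x = x)) /\
  ((forall r x y, ra (x + y) r = ra x r + ra y r) /\
   (forall r s x, ra x (r + s) = ra x r + ra x s) /\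
   (forall r s x, ra x (r * s) = ra (ra x r) s) /\
   (forall x, ra x 1 = x)) /\
  (forall r s x, ra (la r x) s = la r (ra x s)).

Definition is_bilinear_form (R : finPzRingType) (M : finZmodType)
  (la : R -> M -> M) (ra : M -> R -> M) (B : M -> M -> R) : Prop :=
  [/\ (forall x y z, B (x + y) z = B x z + B y z),
      (forall x y z, B x (y + z) = B x y + B x z),
      (forall r x y, B (la r x) y = r * B x y) &
      (forall r x y, B x (ra y r) = B x y * r)].

Definition nondeg_form (R : finPzRingType) (M : finZmodType) (B : M -> M -> R) : Prop :=
  (forall x, (forall y, B x y = 0) -> x = 0) /\
  (forall y, (forall x, B x y = 0) -> y = 0).

Definition char_matrix (R : finPzRingType) (M : finZmodType) (n : nat)
  (chi : R -> algC) (B : M -> M -> R) (e : 'I_n.+1 -> M) : 'M[algC]_n.+1 :=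
  \matrix_(i, j) chi (B (e i) (e j)).

(* For x in M, y |-> chi (B' x y) is a character of the additive group M.
   Generating + non-degenerate means z |-> chi (B z .) is injective, and
   orthogonality of characters shows it reaches every character of M: if
   rho were missed, every chi (B z .) / rho would be a nontrivial character
   summing to 0, while summing first over z gives #|M| (the sum of
   chi (B z y) over z vanishes unless y = 0).  Hence chi (B' x .) =
   chi (B (phi x) .) for an injective phi : M -> M, and the rows of H' are
   those of H permuted by phi. *)

From mathcomp Require Import all_boot all_order all_algebra all_fingroup all_field.
Set Implicit Arguments. Unset Strict Implicit. Unset Printing Implicit Defensive.
Import GRing.Theory.
Local Open Scope ring_scope.

Section ZmodCharacters.
Variable M : finZmodType.

Definition zmod_char (rho : M -> algC) : Prop :=
  {morph rho : a b / a + b >-> a * b} /\ (forall a, rho a != 0).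

Lemma zmod_char0 rho : zmod_char rho -> rho 0 = 1.
Proof.
case=> rhoD rho_neq0; apply: (mulfI (rho_neq0 0)).
by rewrite -rhoD addr0 mulr1.
Qed.

Lemma zmod_charB rho a b : zmod_char rho -> rho (a - b) = rho a / rho b.
Proof.
by case=> rhoD rho_neq0; apply: (mulIf (rho_neq0 b)); rewrite -rhoD subrK divfK.
Qed.

Lemma zmod_char_div rho psi :
  zmod_char rho -> zmod_char psi -> zmod_char (fun a => rho a / psi a).
Proof.
case=> rhoD rho_neq0 [psiD psi_neq0]; split=> [a b|a].
  by rewrite rhoD psiD invfM mulrACA.
by rewrite mulf_neq0 ?invr_eq0.
Qed.

Lemma sum_zmod_char_eq0 (rho : M -> algC) (y0 : M) :
  {morph rho : a b / a + b >-> a * b} -> rho y0 != 1 -> \sum_y rho y = 0.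
Proof.
move=> rhoD rho_y0_neq1.
have shift : \sum_y rho y = rho y0 * \sum_y rho y.
  rewrite mulr_sumr (reindex_inj (addrI y0)) /=.
  by apply: eq_bigr => y _; rewrite rhoD.
have : (1 - rho y0) * \sum_y rho y = 0 by rewrite mulrBl mul1r -shift subrr.
by move/eqP; rewrite mulf_eq0 subr_eq0 eq_sym (negbTE rho_y0_neq1) => /eqP.
Qed.

End ZmodCharacters.

Lemma is_character_zmod_char (R : finPzRingType) (chi : R -> algC) :
  is_character chi -> zmod_char chi.
Proof. by []. Qed.

Lemma imset_zmod_closed (M N : finZmodType) (f : M -> N) :
  {morph f : a b / a - b} ->
  0 \in [set f x | x : M] /\
  (forall u v, u \in [set f x | x : M] -> v \in [set f x | x : M] ->
     u - v \in [set f x | x : M]).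
Proof.
move=> fB; split; first by apply/imsetP; exists 0; rewrite // -(subrr (f 0)) -fB subrr.
by move=> _ _ /imsetP[a _ ->] /imsetP[b _ ->]; apply/imsetP; exists (a - b).
Qed.

Section FormCharacters.
Variables (R : finPzRingType) (chi : R -> algC) (M : finZmodType).
Variables (la : R -> M -> M) (ra : M -> R -> M) (B : M -> M -> R).
Hypotheses (chi_char : is_character chi) (formB : is_bilinear_form la ra B).

Lemma formBl a b y : B (a - b) y = B a y - B b y.
Proof. by case: formB => BDl _ _ _; apply: (addIr (B b y)); rewrite -BDl !subrK. Qed.

Lemma formBr x a b : B x (a - b) = B x a - B x b.
Proof. by case: formB => _ BDr _ _; apply: (addIr (B x b)); rewrite -BDr !subrK. Qed.

Lemma form0r x : B x 0 = 0.
Proof. by rewrite -(subrr 0) formBr subrr. Qed.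

Lemma zmod_char_form x : zmod_char (fun y => chi (B x y)).
Proof.
case: formB chi_char => _ BDr _ _ [chiD chi_neq0].
by split=> [a b|a]; rewrite ?BDr.
Qed.

Hypotheses (chi_gen : generating chi) (nondegB : nondeg_form B).

Lemma form_char_kerl y : (forall x, chi (B x y) = 1) -> y = 0.
Proof.
move=> chiBy; set I := [set B x y | x : M].
have idealI : left_ideal I.
  have [I0 IB] := imset_zmod_closed (fun a b => formBl a b y).
  split=> //; split=> // r _ /imsetP[x _ ->]; apply/imsetP; exists (la r x) => //.
  by case: formB.
have I_eq0 : I = [set 0] by apply: chi_gen.1 => // _ /imsetP[x _ ->].
apply: nondegB.2 => x; apply/eqP; rewrite -in_set1 -I_eq0.
exact: imset_f.
Qed.

Lemma form_char_kerr x : (forall y, chi (B x y) = 1) -> x = 0.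
Proof.
move=> chiBx; set I := [set B x y | y : M].
have idealI : right_ideal I.
  have [I0 IB] := imset_zmod_closed (formBr x).
  split=> //; split=> // r _ /imsetP[y _ ->]; apply/imsetP; exists (ra y r) => //.
  by case: formB.
have I_eq0 : I = [set 0] by apply: chi_gen.2 => // _ /imsetP[y _ ->].
apply: nondegB.1 => y; apply/eqP; rewrite -in_set1 -I_eq0.
exact: imset_f.
Qed.

Lemma sum_form_char_eq0 y : y != 0 -> \sum_z chi (B z y) = 0.
Proof.
move=> y_neq0; have [z0 chiBz0_neq1] : exists z0, chi (B z0 y) != 1.
  apply/existsP; apply: contraR y_neq0 => /existsPn chiBy.
  by apply/eqP/form_char_kerl => z; apply/eqP/negPn.
apply: sum_zmod_char_eq0 chiBz0_neq1 => a b.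
by case: formB chi_char => BDl _ _ _ [chiD _]; rewrite BDl chiD.
Qed.

Lemma zmod_char_form_surj rho :
  zmod_char rho -> exists z, forall y, rho y = chi (B z y).
Proof.
move=> rho_char.
have [/existsP[z /forallP rho_eq]|no_z] :=
  boolP [exists z, [forall y, rho y == chi (B z y)]].
  by exists z => y; apply/eqP.
have orth z : \sum_y chi (B z y) / rho y = 0.
  move: no_z; rewrite negb_exists => /forallP/(_ z).
  rewrite negb_forall => /existsP[y0 rho_y0].
  apply: (sum_zmod_char_eq0 (y0 := y0)).
    exact: (zmod_char_div (zmod_char_form z) rho_char).1.
  by apply: contra rho_y0 => /eqP/divr1_eq ->.
have : \sum_z \sum_y chi (B z y) / rho y = #|M|%:R.
  rewrite exchange_big (bigD1 0) //= [X in _ + X]big1 => [|y y_neq0].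
    have chi0 := zmod_char0 (is_character_zmod_char chi_char).
    rewrite addr0 zmod_char0 // invr1 -sumr_const.
    by apply: eq_bigr => z _; rewrite form0r chi0 mulr1.
  by rewrite -mulr_suml sum_form_char_eq0 ?mul0r.
rewrite big1 // => /eqP; rewrite eq_sym Num.Theory.pnatr_eq0 => /eqP/card0_eq/(_ 0).
by rewrite !inE.
Qed.

End FormCharacters.

Lemma form_char_transfer (R : finPzRingType) (chi : R -> algC) (M : finZmodType)
    (la : R -> M -> M) (ra : M -> R -> M) (B B' : M -> M -> R) :
  is_character chi -> generating chi ->
  is_bilinear_form la ra B -> nondeg_form B ->
  is_bilinear_form la ra B' -> nondeg_form B' ->
  exists2 phi : M -> M, injective phi & forall x y, chi (B' x y) = chi (B (phi x) y).
Proof.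
move=> chi_char chi_gen formB nondegB formB' nondegB'.
have /fin_all_exists[phi chiB'E] :
    forall x, exists z, forall y, chi (B' x y) = chi (B z y).
  move=> x; apply: (zmod_char_form_surj chi_char formB chi_gen nondegB).
  exact: zmod_char_form chi_char formB' x.
exists phi => // x1 x2 phi_eq; apply/eqP; rewrite -subr_eq0; apply/eqP.
apply: (form_char_kerr formB' chi_gen nondegB') => y.
rewrite (formBl formB') (zmod_charB _ _ (is_character_zmod_char chi_char)).
by rewrite !chiB'E phi_eq divff // chi_char.2.
Qed.

Theorem propositionA2 (R : finPzRingType) (chi : R -> algC)
  (M : finZmodType) (la : R -> M -> M) (ra : M -> R -> M)
  (n : nat) (e : 'I_n.+1 -> M) (B B' : M -> M -> R) :
  Frobenius R ->
  is_character chi -> generating chi ->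
  is_bimodule la ra ->
  bijective e -> e ord0 = 0 ->
  is_bilinear_form la ra B -> nondeg_form B ->
  is_bilinear_form la ra B' -> nondeg_form B' ->
  exists s : 'S_(n.+1),
    char_matrix chi B' e = row_perm s (char_matrix chi B e).
Proof.
(* Frobenius R is implied by chi. *)
move=> _ chi_char chi_gen _ [e_inv eK Ke] _ formB nondegB formB' nondegB'.
have [phi phi_inj chiB'E] :=
  form_char_transfer chi_char chi_gen formB nondegB formB' nondegB'.
have s_inj : injective (e_inv \o phi \o e).
  exact: inj_comp (inj_comp (can_inj Ke) phi_inj) (can_inj eK).
exists (perm s_inj); apply/matrixP => i j.
by rewrite !mxE permE /= Ke chiB'E.
Qed.
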